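(* Let $F=\{f_i\}_{i=1}^N$ be a uniform Parseval frame for an $n$-dimensional Hilbert space $\mathcal{H}_n$ and let $p>1$. Then the canonical dual $S_F^{-1}F=F$ belongs to $\zeta_{\mathfrak{F}}^{(1),p}(F)\cap\zeta_{\mathfrak{R}}^{(1),p}(F)\cap\zeta_{\mathcal{N}}^{(1),p}(F)$, and \[\mathrm{AE}_{\mathfrak{F}}^{(1),p}(F)=\mathrm{AE}_{\mathfrak{R}}^{(1),p}(F)=\mathrm{AE}_{\mathcal{N}}^{(1),p}(F)=\frac nN.\]
   Context: A uniform Parseval frame satisfies $\sum_i|\langle f,f_i\rangle|^2=\|f\|^2$ for all $f$ and has all $\|f_i\|$ equal; its frame operator is $S_F=I$. $G=\{g_i\}$ is a dual of $F$ if $f=\sum_i\langle f,f_i\rangle g_i$ for all $f$. For a dual $G$ let $E_if=\langle f,f_i\rangle g_i$ (one-erasure error operator) and define $\mathrm{AE}_{\mathfrak{F}}^{(1),p}(F,G)=\{\frac1N\sum_i\|E_i\|_{\mathfrak{F}}^p\}^{1/p}=\{\frac1N\sum_i(\|f_i\|\|g_i\|)^p\}^{1/p}$ (Frobenius norm), $\mathrm{AE}_{\mathfrak{R}}^{(1),p}(F,G)=\{\frac1N\sum_i\rho(E_i)^p\}^{1/p}=\{\frac1N\sum_i|\langle f_i,g_i\rangle|^p\}^{1/p}$ (spectral radius), and $\mathrm{AE}_{\mathcal{N}}^{(1),p}(F,G)=\{\frac1N\sum_i\omega(E_i)^p\}^{1/p}$ with $\omega(T)=\sup_{\|f\|=1}|\langle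 Tf,f\rangle|$ the numerical radius. For each $\ast\in\{\mathfrak{F},\mathfrak{R},\mathcal{N}\}$, $\mathrm{AE}_\ast^{(1),p}(F)$ is the infimum of $\mathrm{AE}_\ast^{(1),p}(F,G)$ over all duals $G$ of $F$ and $\zeta_\ast^{(1),p}(F)$ is the set of duals attaining it. *)

From HB Require Import structures.
From mathcomp Require Import all_boot all_order all_algebra.
From mathcomp Require Import all_classical all_reals all_analysis.
From mathcomp Require Import complex.
Set Implicit Arguments. Unset Strict Implicit. Unset Printing Implicit Defensive.
Import Order.TTheory GRing.Theory Num.Theory.
Local Open Scope ring_scope.
Local Open Scope classical_set_scope.

Section FrameDefs.
Variable R : realType.
Local Notation C := (complex R).

Definition cabs (z : C) : R := Normc.normc z.

(* inner product <f,g> = sum_k f_k * conj(g_k), linear in the first slot *)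
Definition hdot n (f g : 'cV[C]_n) : C := \sum_(k < n) f k ord0 * conjc (g k ord0).

Definition hnorm n (f : 'cV[C]_n) : R := Num.sqrt (complex.Re (hdot f f)).

Definition parseval n N (F : 'I_N -> 'cV[C]_n) : Prop :=
  forall f : 'cV[C]_n, \sum_(i < N) cabs (hdot f (F i)) ^+ 2 = hnorm f ^+ 2.

Definition uniform n N (F : 'I_N -> 'cV[C]_n) : Prop :=
  forall i j, hnorm (F i) = hnorm (F j).

Definition uniform_parseval n N (F : 'I_N -> 'cV[C]_n) : Prop :=
  parseval F /\ uniform F.

Definition is_dual n N (F G : 'I_N -> 'cV[C]_n) : Prop :=
  forall f : 'cV[C]_n, f = \sum_(i < N) hdot f (F i) *: G i.

Definition adj m n (A : 'M[C]_(m, n)) : 'M[C]_(n, m) := map_mx conjc A^T.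

(* one-erasure error operator E_i f = <f,f_i> g_i, i.e. E_i = g_i f_i^* *)
Definition erasure_op n N (F G : 'I_N -> 'cV[C]_n) (i : 'I_N) : 'M[C]_n :=
  G i *m adj (F i).

Definition frob_norm n (T : 'M[C]_n) : R :=
  Num.sqrt (\sum_(i < n) \sum_(j < n) cabs (T i j) ^+ 2).

Definition spec_radius n (T : 'M[C]_n) : R :=
  sup [set r : R | exists l : C, eigenvalue T l /\ r = cabs l].

Definition num_radius n (T : 'M[C]_n) : R :=
  sup [set r : R | exists f : 'cV[C]_n, hnorm f = 1 /\ r = cabs (hdot (T *m f) f)].

Definition AE_pair (nu : forall n, 'M[C]_n -> R) (p : R) n N
    (F G : 'I_N -> 'cV[C]_n) : R :=
  (N%:R^-1 * \sum_(i < N) (nu n (erasure_op F G i)) `^ p) `^ (p^-1).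

Definition AE_F p n N (F G : 'I_N -> 'cV[C]_n) := AE_pair frob_norm p F G.
Definition AE_R p n N (F G : 'I_N -> 'cV[C]_n) := AE_pair spec_radius p F G.
Definition AE_N p n N (F G : 'I_N -> 'cV[C]_n) := AE_pair num_radius p F G.

Definition AE_opt (nu : forall n, 'M[C]_n -> R) (p : R) n N
    (F : 'I_N -> 'cV[C]_n) : R :=
  inf [set x : R | exists G, is_dual F G /\ x = AE_pair nu p F G].

Definition zeta (nu : forall n, 'M[C]_n -> R) (p : R) n N
    (F : 'I_N -> 'cV[C]_n) : set ('I_N -> 'cV[C]_n) :=
  [set G | is_dual F G /\ AE_pair nu p F G = AE_opt nu p F].

End FrameDefs.

(* For any dual G of F, testing f = sum_i <f,f_i> g_i on an orthonormal basis
   gives the trace identity sum_i <g_i,f_i> = n.  Each of the three norms of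
   the rank-one erasure operator g_i f_i^* dominates its only possible nonzero
   eigenvalue <g_i,f_i>, so the erasure errors sum to at least n and, by the
   power mean inequality, AE(F,G) >= n/N.  Parseval makes F a dual of itself,
   and for f_i f_i^* all three norms equal |f_i|^2 = n/N (uniformity together
   with sum_i |f_i|^2 = n), so F attains the bound. *)

From HB Require Import structures.
From mathcomp Require Import all_boot all_order all_algebra.
From mathcomp Require Import all_classical all_reals all_analysis.
From mathcomp Require Import complex.
From mathcomp Require Import ring lra.
Set Implicit Arguments. Unset Strict Implicit. Unset Printing Implicit Defensive.
Import Order.TTheory GRing.Theory Num.Theory.
Local Open Scope ring_scope.
Local Open Scope classical_set_scope.
Local Open Scope complex_scope.

Section FrameErasures.
Variable R : realType.
Local Notation C := (complex R).

Lemma ge0_ge_sup (E : set R) x : 0 <= x -> ubound E x -> sup E <= x.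
Proof.
move=> x0 Ex; have [->|/set0P E0] := eqVneq E set0; first by rewrite sup0.
exact: ge_sup.
Qed.

Lemma sup_ge0 (E : set R) :
  has_ubound E -> (forall y, E y -> 0 <= y) -> 0 <= sup E.
Proof.
move=> ubE E0; have [->|/set0P[y Ey]] := eqVneq E set0; first by rewrite sup0.
by apply: le_trans (E0 _ Ey) _; apply: ub_le_sup.
Qed.

Lemma inf_eq_min (E : set R) m : E m -> lbound E m -> inf E = m.
Proof.
move=> Em lbm; apply: le_anti; apply/andP; split.
  by apply: ge_inf Em; exists m.
by apply: lb_le_inf => //; exists m.
Qed.

Lemma mean_powR_le N (a : 'I_N -> R) p : 1 < p -> (forall i, 0 <= a i) ->
  (N%:R^-1 * \sum_i a i) `^ p <= N%:R^-1 * \sum_i a i `^ p.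
Proof.
move=> p1 a0; set m := N%:R^-1 * \sum_i a i; set S := \sum_i a i `^ p.
have p0 : 0 < p := lt_trans ltr01 p1.
have [N0|Npos] := posnP N.
  by rewrite /m (_ : N%:R = 0 :> R) ?N0 // invr0 !mul0r powR0 ?gt_eqF.
have Ngt0 : 0 < N%:R :> R by rewrite ltr0n.
have m0 : 0 <= m by rewrite mulr_ge0 ?invr_ge0 ?ler0n ?sumr_ge0.
set q := p / (p - 1).
have p10 : p - 1 != 0 by rewrite subr_eq0 gt_eqF.
have q0 : 0 < q by rewrite divr_gt0 // subr_gt0.
have pq : p^-1 + q^-1 = 1 by rewrite invf_div; field; rewrite gt_eqF.
(* Young's inequality with the conjugate exponents p and q *)
have young i : a i * m `^ (p - 1) <= a i `^ p / p + m `^ p / q.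
  rewrite -[m `^ p](_ : m `^ (p - 1) `^ q = _); last by rewrite -powRrM /q mulrC divfK.
  exact: conjugate_powR (powR_ge0 _ _) p0 q0 pq.
have : \sum_i a i * m `^ (p - 1) <= \sum_i (a i `^ p / p + m `^ p / q).
  by apply: ler_sum => i _; exact: young.
rewrite -mulr_suml big_split /= -mulr_suml sumr_const card_ord -/S -[_ *+ N]mulr_natl.
rewrite -[\sum_i a i](mulVKf (lt0r_neq0 Ngt0)) -/m -mulrA mulr_powRB1 //.
have qE : q^-1 = 1 - p^-1 by rewrite -pq addrC addKr.
rewrite qE; set X := m `^ p => le_XS.
rewrite -(ler_pM2l Ngt0) mulrA mulfV ?lt0r_neq0 // mul1r.
have pV : p * p^-1 = 1 by rewrite mulfV ?gt_eqF.
have : 0 < p^-1 by rewrite invr_gt0.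
move: le_XS; nra.
Qed.

Lemma mean_le_power_mean N (a : 'I_N -> R) p : 1 < p -> (forall i, 0 <= a i) ->
  N%:R^-1 * \sum_i a i <= (N%:R^-1 * \sum_i a i `^ p) `^ p^-1.
Proof.
move=> p1 a0; have p0 : 0 < p := lt_trans ltr01 p1.
have mean_ge0 (b : 'I_N -> R) : (forall i, 0 <= b i) -> 0 <= N%:R^-1 * \sum_i b i.
  by move=> b0; rewrite mulr_ge0 ?invr_ge0 ?ler0n ?sumr_ge0.
set M := N%:R^-1 * \sum_i a i.
rewrite -[leLHS](_ : M `^ p `^ p^-1 = M); last first.
  by rewrite -powRrM mulfV ?gt_eqF // powRr1 ?mean_ge0.
apply: ge0_ler_powR; rewrite ?invr_ge0 ?nnegrE ?powR_ge0 ?mean_ge0 ?(ltW p0) //.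
  by move=> i; exact: powR_ge0.
exact: mean_powR_le.
Qed.

Lemma power_mean_cst N (a : 'I_N -> R) m p : 0 <= m -> 0 < p -> (forall i, a i = m) ->
  (N%:R^-1 * \sum_i a i `^ p) `^ p^-1 = N%:R^-1 * \sum_i a i.
Proof.
move=> m0 p0 /funext ->; rewrite !sumr_const card_ord.
have [->|Npos] := posnP N; first by rewrite invr0 !mul0r powR0 // invr_eq0 gt_eqF.
rewrite -[m `^ p *+ N]mulr_natl -[m *+ N]mulr_natl !mulKf ?pnatr_eq0 -?lt0n //.
by rewrite -powRrM mulfV ?gt_eqF // powRr1.
Qed.

Lemma sqr_sum_mul_le (I : finType) (x y : I -> R) :
  (\sum_i x i * y i) ^+ 2 <= (\sum_i x i ^+ 2) * (\sum_i y i ^+ 2).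
Proof.
have : 0 <= \sum_i \sum_j (x i * y j - x j * y i) ^+ 2.
  by apply: sumr_ge0 => i _; apply: sumr_ge0 => j _; exact: sqr_ge0.
(* Lagrange's identity *)
have -> : \sum_i \sum_j (x i * y j - x j * y i) ^+ 2 =
    \sum_i \sum_j x i ^+ 2 * y j ^+ 2 + \sum_i \sum_j y i ^+ 2 * x j ^+ 2
    - \sum_i \sum_j 2 * (x i * y i) * (x j * y j).
  rewrite -big_split -sumrB /=; apply: eq_bigr => i _.
  by rewrite -big_split -sumrB /=; apply: eq_bigr => j _; ring.
rewrite -!big_distrlr -mulr_sumr /=; nra.
Qed.

Lemma cabsE (z : C) : (cabs z)%:C = `|z|.
Proof. by []. Qed.

Lemma cabs_ge0 (z : C) : 0 <= cabs z.
Proof. by rewrite -ler0c cabsE. Qed.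

Lemma cabs0 : cabs (0 : C) = 0.
Proof. exact: Normc.normc0. Qed.

Lemma cabsM (z w : C) : cabs (z * w) = cabs z * cabs w.
Proof. exact: Normc.normcM. Qed.

Lemma cabsJ (z : C) : cabs (conjc z) = cabs z.
Proof. by apply: complexI; rewrite !cabsE normcJ. Qed.

Lemma ler_cabs_sum (I : finType) (z : I -> C) :
  cabs (\sum_i z i) <= \sum_i cabs (z i).
Proof. by rewrite -lecR rmorph_sum cabsE; exact: ler_norm_sum. Qed.

Lemma cabs_real (x : R) : 0 <= x -> cabs x%:C = x.
Proof. by move=> x0; apply: complexI; rewrite cabsE ger0_norm ?ler0c. Qed.

Lemma cabs_nat k : cabs (k%:R : C) = k%:R.
Proof. by rewrite -(rmorph_nat (real_complex R)) cabs_real. Qed.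

Lemma sqr_cabs (z : C) : (cabs z ^+ 2)%:C = z * conjc z.
Proof. by rewrite rmorphXn /= sqr_normc. Qed.

Section InnerProduct.
Variable n : nat.
Implicit Types f g h : 'cV[C]_n.

Lemma hdotDl f g h : hdot (f + g) h = hdot f h + hdot g h.
Proof. by rewrite /hdot -big_split; apply: eq_bigr => k _; rewrite mxE mulrDl. Qed.

Lemma hdotZl a f h : hdot (a *: f) h = a * hdot f h.
Proof. by rewrite /hdot mulr_sumr; apply: eq_bigr => k _; rewrite mxE mulrA. Qed.

Lemma hdotDr f g h : hdot h (f + g) = hdot h f + hdot h g.
Proof.
by rewrite /hdot -big_split; apply: eq_bigr => k _; rewrite mxE rmorphD mulrDr.
Qed.

Lemma hdotZr a f h : hdot h (a *: f) = conjc a * hdot h f.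
Proof.
by rewrite /hdot mulr_sumr; apply: eq_bigr => k _; rewrite mxE rmorphM mulrCA.
Qed.

Lemma conj_hdot f g : conjc (hdot f g) = hdot g f.
Proof.
by rewrite /hdot rmorph_sum; apply: eq_bigr => k _; rewrite rmorphM /= conjcK mulrC.
Qed.

Lemma hdotxx_sum f : hdot f f = (\sum_k cabs (f k ord0) ^+ 2)%:C.
Proof. by rewrite rmorph_sum; apply: eq_bigr => k _; rewrite /= sqr_cabs. Qed.

Lemma sqr_hnorm f : hnorm f ^+ 2 = \sum_k cabs (f k ord0) ^+ 2.
Proof.
by rewrite /hnorm hdotxx_sum /= sqr_sqrtr // sumr_ge0 // => k _; exact: sqr_ge0.
Qed.

Lemma hdotxx f : hdot f f = (hnorm f ^+ 2)%:C.
Proof. by rewrite sqr_hnorm hdotxx_sum. Qed.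

Lemma hnorm_ge0 f : 0 <= hnorm f.
Proof. exact: sqrtr_ge0. Qed.

Lemma hnormZ a f : hnorm (a *: f) = cabs a * hnorm f.
Proof.
rewrite /hnorm hdotZl hdotZr mulrA -sqr_cabs hdotxx -rmorphM /=.
by rewrite sqrtrM ?sqr_ge0 // !sqrtr_sqr !ger0_norm ?cabs_ge0 ?hnorm_ge0.
Qed.

Lemma cabs_hdot_le f g : cabs (hdot f g) <= hnorm f * hnorm g.
Proof.
apply: le_trans (ler_cabs_sum _) _; under eq_bigr do rewrite cabsM cabsJ.
rewrite -(@ler_pXn2r _ 2) ?nnegrE ?mulr_ge0 ?hnorm_ge0 //; last first.
  by apply: sumr_ge0 => k _; rewrite mulr_ge0 ?cabs_ge0.
by rewrite exprMn !sqr_hnorm; exact: sqr_sum_mul_le.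
Qed.

Lemma hdot_delta f k : hdot f (delta_mx k ord0) = f k ord0.
Proof.
rewrite /hdot (bigD1 k) //= big1 => [|l lk]; rewrite !mxE.
  by rewrite !eqxx conjc1 mulr1 addr0.
by rewrite (negbTE lk) conjc0 mulr0.
Qed.

Lemma adj_mulmx f g : adj f *m g = (hdot g f)%:M.
Proof.
apply/matrixP => i j; rewrite !ord1 !mxE eqxx mulr1n.
by apply: eq_bigr => k _; rewrite !mxE mulrC.
Qed.

Lemma rank1_mulmx g f h : (g *m adj f) *m h = hdot h f *: g.
Proof. by rewrite -mulmxA adj_mulmx mul_mx_scalar. Qed.

End InnerProduct.

Lemma sesquilinear_eq0 (V : lmodType C) (D : V -> V -> C) :
    (forall f g h, D (f + g) h = D f h + D g h) ->
    (forall a f h, D (a *: f) h = a * D f h) ->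
    (forall f g h, D h (f + g) = D h f + D h g) ->
    (forall a f h, D h (a *: f) = conjc a * D h f) ->
  (forall f, D f f = 0) -> forall f h, D f h = 0.
Proof.
move=> DDl DZl DDr DZr D0 f h.
have cross c : conjc c * D f h + c * D h f = 0.
  by have := D0 (f + c *: h); rewrite DDl !DDr !DZl !DZr !D0 !mulr0 !addr0 add0r.
have := cross 1; rewrite conjc1 !mul1r.
have i0 : 'i != 0 :> C by rewrite eq_complex /= oner_eq0 andbF.
have conj_i : conjc 'i = - 'i :> C by apply/eqP; rewrite eq_complex /= oppr0 !eqxx.
have := cross 'i; rewrite conj_i mulNr addrC => /eqP; rewrite subr_eq0.
move=> /eqP /(mulfI i0) ->.
by move/eqP; rewrite -mulr2n -mulr_natl mulf_eq0 pnatr_eq0 /= => /eqP.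
Qed.

Section Frames.
Variables n N : nat.
Implicit Types F G : 'I_N -> 'cV[C]_n.

Lemma parseval_hdot F : parseval F ->
  forall f h, \sum_i hdot f (F i) * conjc (hdot h (F i)) = hdot f h.
Proof.
move=> PF f h; apply/eqP; rewrite -subr_eq0; apply/eqP; move: f h.
pose D f h := \sum_i hdot f (F i) * conjc (hdot h (F i)) - hdot f h.
apply: (@sesquilinear_eq0 _ D) => [f g h|a f h|f g h|a f h|f]; rewrite /D.
- under eq_bigr do rewrite hdotDl mulrDl.
  by rewrite big_split hdotDl opprD addrACA.
- under eq_bigr do rewrite hdotZl -mulrA.
  by rewrite -mulr_sumr hdotZl -mulrBr.
- under eq_bigr do rewrite hdotDl rmorphD mulrDr.
  by rewrite big_split hdotDr opprD addrACA.
- under eq_bigr do rewrite hdotZl rmorphM mulrCA.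
  by rewrite -mulr_sumr hdotZr -mulrBr.
- apply/eqP; rewrite subr_eq0 hdotxx -(PF f) rmorph_sum; apply/eqP.
  by apply: eq_bigr => i _; rewrite /= sqr_cabs.
Qed.

Lemma parseval_self_dual F : parseval F -> is_dual F F.
Proof.
move=> PF f; apply/matrixP => k j; rewrite (ord1 j) summxE.
rewrite -[LHS](hdot_delta f k) -(parseval_hdot PF); apply: eq_bigr => i _.
by rewrite mxE conj_hdot hdot_delta.
Qed.

Lemma dual_sum_hdot F G : is_dual F G -> \sum_i hdot (G i) (F i) = n%:R.
Proof.
move=> dG; rewrite /hdot exchange_big /= -[n in n%:R]card_ord -sumr_const.
apply: eq_bigr => k _.
have := congr1 (fun M : 'cV_n => M k ord0) (dG (delta_mx k ord0)).
rewrite /= summxE mxE !eqxx /= mulr1n => ->; apply: eq_bigr => i _.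
by rewrite mxE -conj_hdot hdot_delta mulrC.
Qed.

Lemma parseval_sum_sqr_hnorm F : parseval F -> \sum_i hnorm (F i) ^+ 2 = n%:R.
Proof.
move=> /parseval_self_dual /dual_sum_hdot; under eq_bigr do rewrite hdotxx.
by rewrite -rmorph_sum -(rmorph_nat (real_complex R)) => /complexI.
Qed.

Lemma uniform_parseval_sqr_hnorm F : uniform_parseval F ->
  forall i, hnorm (F i) ^+ 2 = n%:R / N%:R.
Proof.
move=> [PF UF] i.
have N0 : N%:R != 0 :> R by rewrite pnatr_eq0 -lt0n (leq_ltn_trans _ (ltn_ord i)).
rewrite -(parseval_sum_sqr_hnorm PF).
under eq_bigr do rewrite (UF _ i).
by rewrite sumr_const card_ord -[_ *+ N]mulr_natr mulfK.
Qed.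

End Frames.

Section RankOne.
Variable n : nat.
Implicit Types f g h : 'cV[C]_n.

Lemma frob_norm_rank1 g f : frob_norm (g *m adj f) = hnorm g * hnorm f.
Proof.
rewrite -[RHS]ger0_norm ?mulr_ge0 ?hnorm_ge0 // -sqrtr_sqr exprMn !sqr_hnorm.
rewrite big_distrlr /=; congr Num.sqrt.
apply: eq_bigr => j _; apply: eq_bigr => k _.
by rewrite !mxE big_ord1 !mxE cabsM cabsJ exprMn.
Qed.

Lemma eigenvalue_rank1 g f l : eigenvalue (g *m adj f) l -> l = 0 \/ l = hdot g f.
Proof.
move=> /eigenvalueP [v vE v0]; have [->|l0] := eqVneq l 0; [by left | right].
set s := (v *m g) ord0 ord0.
have vgf : v *m (g *m adj f) = s *: adj f.
  by rewrite mulmxA [v *m g]mx11_scalar mul_scalar_mx.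
have {}vE : v = (s / l) *: adj f.
  by apply: (scalerI l0); rewrite -vE vgf scalerA mulrC divfK.
have s0 : s != 0 by apply: contraNneq v0 => s0; rewrite vE s0 mul0r scale0r.
have sE : s = s / l * hdot g f.
  by rewrite {1}/s vE -scalemxAl adj_mulmx !mxE eqxx mulr1n.
by apply: (mulfI s0); rewrite {1}sE mulrAC divfK.
Qed.

Lemma eigenvalue_rank1_hdot g f : hdot g f != 0 -> eigenvalue (g *m adj f) (hdot g f).
Proof.
move=> gf0; apply/eigenvalueP; exists (adj f).
  by rewrite mulmxA adj_mulmx mul_scalar_mx.
apply: contraNneq gf0 => f0; have := adj_mulmx f g.
by rewrite f0 mul0mx => /matrixP /(_ ord0 ord0); rewrite !mxE eqxx mulr1n => <-.
Qed.

Lemma spec_radius_rank1 g f : spec_radius (g *m adj f) = cabs (hdot g f).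
Proof.
rewrite /spec_radius; set E := [set r | _].
have ubE : ubound E (cabs (hdot g f)).
  by move=> _ [l [/eigenvalue_rank1 [->|->] ->]]; rewrite ?cabs0 ?cabs_ge0.
have hasE : has_ubound E by exists (cabs (hdot g f)).
apply: le_anti; rewrite ge0_ge_sup ?cabs_ge0 //=.
have [->|gf0] := eqVneq (hdot g f) 0.
  by rewrite cabs0; apply: sup_ge0 => // _ [l [_ ->]]; exact: cabs_ge0.
by apply: ub_le_sup => //; exists (hdot g f); split=> //; exact: eigenvalue_rank1_hdot.
Qed.

Lemma num_radius_rank1 g f :
  cabs (hdot g f) <= num_radius (g *m adj f) <= hnorm f * hnorm g.
Proof.
rewrite /num_radius; set E := [set r | _].
have ubE : ubound E (hnorm f * hnorm g).
  move=> _ [v [v1 ->]]; rewrite rank1_mulmx hdotZl cabsM.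
  have := ler_pM (cabs_ge0 _) (cabs_ge0 _) (cabs_hdot_le v f) (cabs_hdot_le g v).
  by rewrite v1 mul1r mulr1.
have hasE : has_ubound E by exists (hnorm f * hnorm g).
rewrite ge0_ge_sup ?mulr_ge0 ?hnorm_ge0 // andbT.
have [->|gf0] := eqVneq (hdot g f) 0.
  by rewrite cabs0; apply: sup_ge0 => // _ [v [_ ->]]; exact: cabs_ge0.
have g0 : hnorm g != 0.
  apply: contraNneq gf0 => g0; apply/eqP/Normc.eq0_normc/le_anti.
  by rewrite cabs_ge0 andbT -(mul0r (hnorm f)) -g0 cabs_hdot_le.
set r := (hnorm g)^-1.
have rr : r * (r * hnorm g ^+ 2) = 1 by rewrite mulrA -expr2 -exprMn mulVf // expr1n.
apply: ub_le_sup => //; exists (r%:C *: g); split.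
  by rewrite hnormZ cabs_real ?invr_ge0 ?hnorm_ge0 // mulVf.
rewrite rank1_mulmx !hdotZl hdotZr conjc_real hdotxx.
transitivity (cabs (hdot g f * (r * (r * hnorm g ^+ 2))%:C)); first by rewrite rr mulr1.
by rewrite !rmorphM /=; congr cabs; ring.
Qed.

End RankOne.

Lemma canonical_dual_optimal (nu : forall n, 'M[C]_n -> R) p n N
    (F : 'I_N -> 'cV[C]_n) :
  uniform_parseval F -> 1 < p ->
  (forall g f : 'cV[C]_n, cabs (hdot g f) <= nu n (g *m adj f)) ->
  (forall f : 'cV[C]_n, nu n (f *m adj f) = hnorm f ^+ 2) ->
  zeta nu p F F /\ AE_opt nu p F = n%:R / N%:R.
Proof.
move=> UF p1 nu_ge nu_proj; have [PF _] := UF; have dF := parseval_self_dual PF.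
have nN0 : 0 <= n%:R / N%:R :> R by rewrite divr_ge0.
have AE_F : AE_pair nu p F F = n%:R / N%:R.
  rewrite /AE_pair /erasure_op (power_mean_cst (m := n%:R / N%:R)) //.
  - by under eq_bigr do rewrite nu_proj; rewrite parseval_sum_sqr_hnorm // mulrC.
  - exact: lt_trans p1.
  - by move=> i; rewrite nu_proj uniform_parseval_sqr_hnorm.
have AE_ge G : is_dual F G -> n%:R / N%:R <= AE_pair nu p F G.
  move=> dG; apply: le_trans (mean_le_power_mean p1 _); last first.
    by move=> i; apply: le_trans (cabs_ge0 _) (nu_ge _ _).
  rewrite mulrC ler_wpM2l ?invr_ge0 // -(cabs_nat n) -(dual_sum_hdot dG).
  by apply: le_trans (ler_cabs_sum _) (ler_sum _ (fun i _ => nu_ge _ _)).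
have opt : AE_opt nu p F = n%:R / N%:R.
  by apply: inf_eq_min => [|_ [G [dG ->]]]; [exists F | exact: AE_ge].
by rewrite /zeta /= opt AE_F.
Qed.

End FrameErasures.

Theorem proposition5p8 (R : realType) (n N : nat) (F : 'I_N -> 'cV[complex R]_n)
    (p : R) :
  uniform_parseval F -> 1 < p ->
  F \in (zeta (@frob_norm R) p F `&` zeta (@spec_radius R) p F
           `&` zeta (@num_radius R) p F) /\
  AE_opt (@frob_norm R) p F = n%:R / N%:R /\
  AE_opt (@spec_radius R) p F = n%:R / N%:R /\
  AE_opt (@num_radius R) p F = n%:R / N%:R.
Proof.
move=> UF p1.
have [zF ->] : zeta (@frob_norm R) p F F /\ AE_opt (@frob_norm R) p F = n%:R / N%:R.
  apply: canonical_dual_optimal => // [g f|f]; rewrite frob_norm_rank1 ?expr2 //.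
  exact: cabs_hdot_le.
have [zR ->] : zeta (@spec_radius R) p F F /\ AE_opt (@spec_radius R) p F = n%:R / N%:R.
  apply: canonical_dual_optimal => // [g f|f]; rewrite spec_radius_rank1 //.
  by rewrite hdotxx cabs_real ?sqr_ge0.
have [zN ->] : zeta (@num_radius R) p F F /\ AE_opt (@num_radius R) p F = n%:R / N%:R.
  apply: canonical_dual_optimal => // [g f|f]; first by case/andP: (num_radius_rank1 g f).
  have /andP[ge le] := num_radius_rank1 f f.
  rewrite hdotxx cabs_real ?sqr_ge0 // in ge; rewrite -expr2 in le.
  by apply: le_anti; rewrite ge le.
by split=> //; apply/mem_set; split; first split.
Qed.
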